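(* Let $\epsilon>0$ and $c>1/4+\epsilon$. Then for every $n$, $\mathrm{ORS}_n(cn)\le 1/\epsilon+1$.
   Context: For a matching $M$, $V(M)$ denotes the set of vertices matched by $M$. A sequence $M_1,\dots,M_t$ of pairwise edge-disjoint matchings is called ordered-induced if for every $i\in[t]$, $M_i$ is an induced matching of the graph with edge set $M_1\cup\dots\cup M_i$, i.e., no edge of $M_1\cup\cdots\cup M_{i-1}$ has both endpoints in $V(M_i)$. An $n$-vertex graph is an $\mathrm{ORS}_n(r,t)$ graph if its edge set is the union of an ordered-induced sequence of $t$ matchings, each of size exactly $r$. $\mathrm{ORS}_n(r)$ denotes the maximum $t$ for which an $\mathrm{ORS}_n(r,t)$ graph exists (for non-integer $r$, $r$ is replaced by $\lceil r\rceil$). *)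

From mathcomp Require Import all_boot all_order all_algebra.
Set Implicit Arguments. Unset Strict Implicit. Unset Printing Implicit Defensive.

Definition is_edge (n : nat) (e : {set 'I_n}) : bool := #|e| == 2.

Definition is_matching (n : nat) (M : {set {set 'I_n}}) : bool :=
  [forall e in M, is_edge e] &&
  [forall e in M, forall f in M, (e != f) ==> [disjoint e & f]].

Definition matched_vertices (n : nat) (M : {set {set 'I_n}}) : {set 'I_n} :=
  \bigcup_(e in M) e.

Definition pairwise_edge_disjoint (n t : nat) (M : 'I_t -> {set {set 'I_n}}) : Prop :=
  forall i j : 'I_t, i != j -> [disjoint M i & M j].

Definition ordered_induced (n t : nat) (M : 'I_t -> {set {set 'I_n}}) : Prop :=
  forall i j : 'I_t, (j < i)%N ->
    forall e, e \in M j -> ~~ (e \subset matched_vertices (M i)).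

(* M witnesses an ORS_n(r,t) graph (its edge set is the union of the M i). *)
Definition ORS_seq (n r t : nat) (M : 'I_t -> {set {set 'I_n}}) : Prop :=
  [/\ forall i, is_matching (M i),
      forall i, #|M i| = r,
      pairwise_edge_disjoint M
    & ordered_induced M].

From mathcomp Require Import all_boot all_order all_algebra.
From mathcomp Require Import ring lra.
Import Order.TTheory GRing.Theory Num.Theory.

Set Implicit Arguments.
Unset Strict Implicit.
Unset Printing Implicit Defensive.

(* Let V_i = V(M_i), so |V_i| = 2r.  For j < i every edge of M_j meets V_i
   in at most one vertex, hence |V_i ∩ V_j| <= r.  Counting, for each vertex,
   the number d(v) of sets V_i containing it, Cauchy-Schwarz gives
   (2rt)^2 = (Σ d)^2 <= n Σ d^2 = n Σ_{i,j} |V_i ∩ V_j| <= n (2rt + t(t-1)r),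
   i.e. 4rt <= n(t+1).  With r >= cn > (1/4 + eps) n this forces 4 eps t <= 1. *)

Lemma card_matched_vertices n (M : {set {set 'I_n}}) :
  is_matching M -> #|matched_vertices M| = (2 * #|M|)%N.
Proof.
case/andP=> /forallP edgeM /forallP disjM.
have trivM : trivIset M.
  apply/trivIsetP=> A B AM BM neqAB.
  by move: (disjM A); rewrite AM /= => /forallP /(_ B); rewrite BM neqAB.
move: (leq_card_cover M).2; rewrite trivM => /eqP.
rewrite /matched_vertices => ->.
rewrite (eq_bigr (fun _ => 2%N)) => [|e eM]; first by rewrite sum_nat_const mulnC.
by move: (edgeM e); rewrite eM => /eqP.
Qed.

Lemma card_setI_matched_vertices n (M : {set {set 'I_n}}) (A : {set 'I_n}) :
  is_matching M -> (forall e, e \in M -> ~~ (e \subset A)) ->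
  #|A :&: matched_vertices M| <= #|M|.
Proof.
move=> /andP [/forallP edgeM _] notinA.
pose edge_of (v : 'I_n) := odflt set0 [pick e in M | v \in e].
have edge_ofP v : v \in matched_vertices M -> edge_of v \in M /\ v \in edge_of v.
  move=> /bigcupP [e eM ve]; rewrite /edge_of.
  by case: pickP => [e' /andP [] //|/(_ e)]; rewrite eM ve.
have edge_of_inj : {in A :&: matched_vertices M &, injective edge_of}.
  move=> v w /setIP [vA vM] /setIP [wA wM] eq_vw.
  apply/eqP; apply: contraT => neq_vw.
  have [evM ve] := edge_ofP v vM; have [_ we] := edge_ofP w wM.
  have e_vw : edge_of v = [set v; w].
    apply/esym/eqP; rewrite eqEcard cards2 neq_vw.
    move: (edgeM (edge_of v)); rewrite evM => /eqP ->; rewrite andbT.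
    by apply/subsetP=> x /set2P [] ->; rewrite // eq_vw.
  suff : edge_of v \subset A by rewrite (negbTE (notinA _ evM)).
  by rewrite e_vw; apply/subsetP=> x /set2P [] ->.
rewrite -(card_in_imset edge_of_inj); apply: subset_leq_card.
by apply/subsetP=> _ /imsetP [v /setIP [_ vM] ->]; case: (edge_ofP v vM).
Qed.

Section OrderedInducedSequence.

Variables (n r t : nat) (M : 'I_t -> {set {set 'I_n}}).
Hypothesis ORS_M : ORS_seq r M.

Let V i := matched_vertices (M i).

Lemma ORS_card_matched_vertices i : #|V i| = (2 * r)%N.
Proof. by case: ORS_M => matchM cardM _ _; rewrite card_matched_vertices ?cardM. Qed.

Lemma ORS_card_setI i j : i != j -> #|V i :&: V j| <= r.
Proof.
case: ORS_M => matchM cardM _ indM.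
wlog lt_ji : i j / (j < i)%N.
  move=> IH neq_ij; move: (neq_ij); rewrite neq_ltn => /orP [lt_ij|lt_ji].
    by rewrite setIC IH // eq_sym.
  exact: IH.
move=> _; rewrite -(cardM j).
exact/card_setI_matched_vertices/indM.
Qed.

End OrderedInducedSequence.

Lemma sum_sqr_le (T : finType) (x : T -> nat) :
  (\sum_v x v) ^ 2 <= #|T| * \sum_v x v ^ 2.
Proof.
rewrite -mulnn big_distrl /=.
have square_sum : \sum_u (x u * \sum_v x v) = \sum_u \sum_v x u * x v.
  by apply: eq_bigr => u _; rewrite big_distrr.
rewrite square_sum -(leq_pmul2l (isT : 0 < 2)) big_distrr /=.
apply: (@leq_trans (\sum_u \sum_v (x u ^ 2 + x v ^ 2))).
  apply: leq_sum => u _; rewrite big_distrr; apply: leq_sum => v _.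
  exact: (nat_Cauchy _ _).1.
rewrite (eq_bigr (fun u => #|T| * x u ^ 2 + \sum_v x v ^ 2)).
  by rewrite big_split /= -big_distrr sum_nat_const mul2n -addnn.
by move=> u _; rewrite big_split /= sum_nat_const.
Qed.

Section CoverDegree.

Variables (n t : nat) (V : 'I_t -> {set 'I_n}).

Definition cover_degree (v : 'I_n) : nat := \sum_i (v \in V i).

Lemma sum_cover_degree : \sum_v cover_degree v = \sum_i #|V i|.
Proof.
rewrite exchange_big; apply: eq_bigr => i _.
by rewrite -sum1_card [RHS]big_mkcond; apply: eq_bigr => v _; case: (v \in V i).
Qed.

Lemma sum_cover_degree_sqr :
  \sum_v cover_degree v ^ 2 = \sum_i \sum_j #|V i :&: V j|.
Proof.
have degree_sqr v : cover_degree v ^ 2 = \sum_i \sum_j (v \in V i :&: V j : nat).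
  rewrite -mulnn big_distrl; apply: eq_bigr => i _.
  rewrite big_distrr; apply: eq_bigr => j _.
  by rewrite inE; case: (v \in V i); case: (v \in V j).
rewrite (eq_bigr _ (fun v _ => degree_sqr v)) exchange_big.
apply: eq_bigr => i _; rewrite exchange_big; apply: eq_bigr => j _.
by rewrite -sum1_card [RHS]big_mkcond; apply: eq_bigr => v _; case: (v \in _).
Qed.

End CoverDegree.

Lemma ORS_double_count n r t (M : 'I_t -> {set {set 'I_n}}) :
  ORS_seq r M -> 4 * r * t <= n * t.+1.
Proof.
move=> ORS_M; pose V i := matched_vertices (M i).
have cardV i : #|V i| = (2 * r)%N := ORS_card_matched_vertices ORS_M i.
have row_bound i : \sum_j #|V i :&: V j| <= t * r + r.
  rewrite (bigD1 i) //= setIid cardV.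
  rewrite -[X in _ <= X * r + _]card_ord -sum_nat_const [X in _ <= X + _](bigD1 i) //=.
  rewrite addnAC addnn -mul2n leq_add2l.
  by apply: leq_sum => j neq_ji; apply: (ORS_card_setI ORS_M); rewrite eq_sym.
have pairs_bound : \sum_i \sum_j #|V i :&: V j| <= t * (t * r + r).
  by rewrite -[t in t * _]card_ord -sum_nat_const; apply: leq_sum.
have CS := sum_sqr_le (cover_degree V).
rewrite sum_cover_degree sum_cover_degree_sqr card_ord in CS.
rewrite (eq_bigr _ (fun i _ => cardV i)) sum_nat_const card_ord in CS.
have {pairs_bound} CS' := leq_trans CS (leq_mul (leqnn n) pairs_bound).
have [->|r_gt0] := posnP r; first by rewrite muln0 mul0n.
have [->|t_gt0] := posnP t; first by rewrite muln0.
have rt_gt0 : 0 < r * t by rewrite muln_gt0 r_gt0.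
rewrite -(leq_pmul2l rt_gt0).
have -> : (r * t) * (4 * r * t) = (t * (2 * r)) ^ 2 by ring.
by have -> : (r * t) * (n * t.+1) = n * (t * (t * r + r)) by ring.
Qed.

Local Open Scope ring_scope.

Theorem theorem5p4 (R : archiRealFieldType) (eps c : R) (n : nat) :
  0 < eps -> 1 / 4 + eps < c -> (0 < n)%N ->
  forall (r t : nat) (M : 'I_t -> {set {set 'I_n}}),
    r%:Z = Num.ceil (c * n%:R) ->
    ORS_seq r M ->
    t%:R <= 1 / eps + 1.
Proof.
move=> eps_gt0 c_gt n_gt0 r t M r_def ORS_M.
have count : 4 * r%:R * t%:R <= n%:R * (t%:R + 1) :> R.
  by move: (ORS_double_count ORS_M); rewrite -(ler_nat R) -[t.+1]addn1 !natrM natrD.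
have r_ge : c * n%:R <= r%:R by have := ceil_ge (c * n%:R); rewrite -r_def.
have n_pos : 0 < n%:R :> R by rewrite ltr0n.
have t_ge0 : 0 <= t%:R :> R := ler0n R t.
have r_t : c * n%:R * t%:R <= r%:R * t%:R by rewrite ler_wpM2r.
have c_nt : (1 / 4 + eps) * (n%:R * t%:R) <= c * (n%:R * t%:R).
  by rewrite ler_wpM2r ?mulr_ge0 // ltW.
have : n%:R * (4 * eps * t%:R) <= n%:R * 1 by lra.
rewrite ler_pM2l // => eps_t.
have : t%:R <= 1 / eps by rewrite ler_pdivlMr //; lra.
lra.
Qed.
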